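(* For every unweighted congestion game $\mathcal{G}$ with quadratic latency functions, $\mathrm{Apx}^1_\emptyset(\mathcal{G})\le 37.5888$.
   Context: A weighted congestion game consists of a finite set $[n]=\{1,\dots,n\}$ of players, a finite set $E$ of resources, for each player $i$ a weight $w_i>0$ and a nonempty finite strategy set $\Sigma_i\subseteq 2^E$, and for each resource $e$ a latency function $\ell_e:\mathbb{R}_{\ge 0}\to\mathbb{R}_{\ge 0}$. It is unweighted if $w_i=1$ for all $i$. Quadratic latency functions means $\ell_e(x)=\sum_{j=0}^{2}\alpha_{e,j}x^j$ with all $\alpha_{e,j}\ge 0$. For a (possibly partial) profile in which each player in some subset $P\subseteq[n]$ has chosen a strategy $s_i$, the congestion of $e$ is $L_e=\sum_{i\in P:\,e\in s_i}w_i$ and the cost of a player $i\in P$ is $\sum_{e\in s_i}\ell_e(L_e)$. For a full profile $S$, $\mathrm{SUM}(S)=\sum_{i\in[n]}c_i(S)$ and $S^*$ minimizes $\mathrm{SUM}$. A one-round walk from the empty strategy profile: starting with no player having chosen a strategy, the players arrive one at a time in some order, and each arriving player selects a best response, i.e., a strategy in her strategy set minimizing her cost given the strategies already chosen by the previously arrived players (later players not yet present); the outcome is the full profile after all $n$ players have chosen. $\mathrm{Apx}^1_\emptyset(\mathcal{G})$ is the maximum, over all orderings of the players and all choices among best responses, of $\mathrm{SUM}(\text{outcome})/\mathrm{SUM}(S^* )$. *)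

From HB Require Import structures.
From mathcomp Require Import all_boot all_order all_algebra all_fingroup.
Set Implicit Arguments. Unset Strict Implicit. Unset Printing Implicit Defensive.
Import Order.TTheory GRing.Theory Num.Theory.
Local Open Scope ring_scope.

Section Congestion.
Variables (R : realFieldType) (n : nat) (E : finType).

Definition qlatency (a0 a1 a2 : E -> R) (e : E) (x : R) : R :=
  a0 e + a1 e * x + a2 e * x ^+ 2.

(* partial profile: None = player not (yet) present *)
Definition pprofile := 'I_n -> option {set E}.

Definition congestion (w : 'I_n -> R) (P : pprofile) (e : E) : R :=
  \sum_(i < n | if P i is Some s then e \in s else false) w i.

Definition pcost (w : 'I_n -> R) (ell : E -> R -> R) (P : pprofile) (i : 'I_n) : R :=
  if P i is Some s then \sum_(e in s) ell e (congestion w P e) else 0.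

Definition extend (P : pprofile) (i : 'I_n) (s : {set E}) : pprofile :=
  fun j => if j == i then Some s else P j.

Definition full (S : 'I_n -> {set E}) : pprofile := fun j => Some (S j).

Definition feasible (Sigma : 'I_n -> {set {set E}}) (S : 'I_n -> {set E}) :=
  forall i, S i \in Sigma i.

Definition SUM (w : 'I_n -> R) (ell : E -> R -> R) (S : 'I_n -> {set E}) : R :=
  \sum_(i < n) pcost w ell (full S) i.

Definition is_optimum w ell Sigma (Sopt : 'I_n -> {set E}) :=
  feasible Sigma Sopt /\
  forall S, feasible Sigma S -> SUM w ell Sopt <= SUM w ell S.

Definition best_response w ell (Sigma : 'I_n -> {set {set E}}) (P : pprofile)
    (i : 'I_n) (s : {set E}) :=
  s \in Sigma i /\
  forall s', s' \in Sigma i -> pcost w ell (extend P i s) i <= pcost w ell (extend P i s') i.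

(* partial profile seen by player i on arrival: players arriving before i
   (pos j < pos i, where pos j is the arrival time of j) with their choices *)
Definition before (pos : {perm 'I_n}) (S : 'I_n -> {set E}) (i : 'I_n) : pprofile :=
  fun j => if (pos j < pos i)%N then Some (S j) else None.

(* S is the outcome of a one-round walk from the empty profile with arrival
   order pos, every arriving player choosing a best response *)
Definition one_round_outcome w ell Sigma (pos : {perm 'I_n}) (S : 'I_n -> {set E}) :=
  forall i, best_response w ell Sigma (before pos S i) i (S i).

End Congestion.

(* Write L_e and O_e for the number of players using resource e in the
   outcome S and in the optimum Sopt.  The argument is Rosenthal's potential
   argument, with a per-resource "smoothness" inequality:

   1. A player arriving with A_e earlier users of e pays ell_e(A_e + 1) on e.
      Summing the best-response inequalities over all players, the left-hand
      sides add up to the potential  Phi = sum_e sum_(k < L_e) ell_e(k+1)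
      (each user of e sees a distinct number of earlier users), while the
      deviation to Sopt costs at most  Dev = sum_e O_e ell_e(L_e + 1);
      hence Phi <= Dev.  This holds for any nondecreasing latencies.
   2. For quadratic latencies and all naturals L, O,
        L ell(L) <= c O ell(O) + kappa (Phi_e(L) - O ell(L + 1))
      with c = 37.5888 and kappa = 3309/625; the inequality is linear in the
      three coefficients, so it reduces to three polynomial inequalities.
   3. Summing 2 over resources and using 1 gives SUM(S) <= c SUM(Sopt). *)

From HB Require Import structures.
From mathcomp Require Import all_boot all_order all_algebra all_fingroup.
From mathcomp Require Import ring lra.
Set Implicit Arguments. Unset Strict Implicit. Unset Printing Implicit Defensive.
Import Order.TTheory GRing.Theory Num.Theory.
Local Open Scope ring_scope.

Definition apx_ratio {R : realFieldType} : R := 23493/625.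
Definition kappa {R : realFieldType} : R := 3309/625.

(* Slack of the per-resource inequality in the coefficient of x^2 (slack2)
   and of x (slack1), using the closed forms of sum_(k<L) (k+1)^j. *)
Definition slack2 {R : realFieldType} (L o : R) : R :=
  kappa * ((2 * L ^+ 3 + 3 * L ^+ 2 + L) / 6 - o * (L + 1) ^+ 2)
  - L ^+ 3 + apx_ratio * o ^+ 3.
Definition slack1 {R : realFieldType} (L o : R) : R :=
  kappa * ((L ^+ 2 + L) / 2 - o * (L + 1)) - L ^+ 2 + apx_ratio * o ^+ 2.

Section PolynomialBounds.
Variable R : realFieldType.

(* For large loads the cubic in o is minimised near o = 265/1223 (L + 1),
   where it has a double root factor. *)
Lemma slack2_large_load (L o : R) : 5 <= L -> 0 <= o -> 0 <= slack2 L o.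
Proof.
move=> hL ho; rewrite /slack2 /kappa /apx_ratio.
have h1 : 0 <= (o - 265/1223 * (L + 1)) ^+ 2 * (o + 2 * (265/1223) * (L + 1)).
  by apply: mulr_ge0; [exact: sqr_ge0 | nra].
have h2 : 0 <= (L + 1) ^+ 2 * o by apply: mulr_ge0 => //; exact: sqr_ge0.
have h3 : 0 <= (L - 5) * L ^+ 2 by apply: mulr_ge0; [lra | exact: sqr_ge0].
have h4 : 0 <= (L - 5) * L by apply: mulr_ge0; lra.
nra.
Qed.

Lemma slack2_small_load (L o : R) : 0 <= L -> L <= 5 -> 2 <= o -> 0 <= slack2 L o.
Proof.
move=> hL hL5 ho; rewrite /slack2 /kappa /apx_ratio.
have h1 : 0 <= (o - 2) * o ^+ 2 by apply: mulr_ge0; [lra | exact: sqr_ge0].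
have h2 : 0 <= (o - 2) * o by apply: mulr_ge0; lra.
have h3 : 0 <= (5 - L) * o by apply: mulr_ge0; lra.
have h4 : 0 <= (5 - L) * L * o by apply: mulr_ge0; [apply: mulr_ge0|]; lra.
have h5 : 0 <= L ^+ 3 by apply: exprn_ge0.
nra.
Qed.

Lemma slack2_no_opt (L : R) : 0 <= L -> 0 <= slack2 L 0.
Proof.
move=> hL; rewrite /slack2 /kappa /apx_ratio.
have h1 : 0 <= L ^+ 3 by apply: exprn_ge0.
have h2 : 0 <= L ^+ 2 by apply: exprn_ge0.
nra.
Qed.

(* The cubic slack is nonnegative at all integer points; the only case not
   covered by the real bounds above, o = 1 and L < 5, is checked directly. *)
Lemma slack2_nat (L o : nat) : 0 <= slack2 (L%:R : R) o%:R.
Proof.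
case: (leqP 5 L) => hL.
  by apply: slack2_large_load; [rewrite (ler_nat R 5 L) | exact: ler0n].
case: o => [|[|o]]; first by apply: slack2_no_opt; exact: ler0n.
  by case: L hL => [|[|[|[|[|L]]]]] // _; rewrite /slack2 /kappa /apx_ratio; lra.
apply: slack2_small_load; first exact: ler0n.
  by rewrite (ler_nat R L 5) ltnW.
by rewrite (ler_nat R 2 o.+2).
Qed.

Lemma slack1_nat (L o : nat) : 0 <= slack1 (L%:R : R) o%:R.
Proof.
have hL : 0 <= (L%:R : R) := ler0n _ _.
case: o => [|o]; rewrite /slack1 /kappa /apx_ratio; first nra.
have ho : 1 <= (o.+1%:R : R) by rewrite (ler_nat R 1 o.+1).
have h : 0 <= (o.+1%:R - 1/10 * (L%:R + 1)) ^+ 2 :> R by exact: sqr_ge0.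
nra.
Qed.

End PolynomialBounds.

Section QuadraticLatency.
Variables (R : realFieldType) (E : finType) (a0 a1 a2 : E -> R).
Hypothesis a_ge0 : forall e, 0 <= a0 e /\ 0 <= a1 e /\ 0 <= a2 e.
Local Notation ell := (qlatency a0 a1 a2).

Lemma qlatency_mono e (x y : R) : 0 <= x -> x <= y -> ell e x <= ell e y.
Proof.
move=> hx hxy; have [h0 [h1 h2]] := a_ge0 e; rewrite /qlatency.
have d1 : 0 <= a1 e * (y - x) by apply: mulr_ge0; lra.
have d2 : 0 <= a2 e * ((y - x) * (y + x)) by apply: mulr_ge0 => //; apply: mulr_ge0; lra.
nra.
Qed.

Lemma qlatency_potential e (L : nat) :
  \sum_(k < L) ell e k.+1%:R =
  a0 e * L%:R + a1 e * ((L%:R ^+ 2 + L%:R) / 2)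
  + a2 e * ((2 * L%:R ^+ 3 + 3 * L%:R ^+ 2 + L%:R) / 6).
Proof.
elim: L => [|L IH]; first by rewrite big_ord0; field.
by rewrite big_ord_recr /= IH /qlatency -natr1; field.
Qed.

(* Per-resource smoothness inequality: the load L of the outcome against the
   load o of the optimum.  Its slack is a nonnegative combination of the
   coefficients a0 e, a1 e, a2 e. *)
Lemma resource_smoothness e (L o : nat) :
  L%:R * ell e L%:R <=
  apx_ratio * (o%:R * ell e o%:R)
  + kappa * (\sum_(k < L) ell e k.+1%:R - o%:R * ell e (L%:R + 1)).
Proof.
rewrite qlatency_potential -subr_ge0.
have hL : 0 <= (L%:R : R) := ler0n _ _.
have ho : 0 <= (o%:R : R) := ler0n _ _.
have slack0 : 0 <= (kappa - 1) * (L%:R : R) + (apx_ratio - kappa) * o%:R.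
  by rewrite /kappa /apx_ratio; nra.
have [h0 [h1 h2]] := a_ge0 e.
set rhs := (X in 0 <= X); have -> : rhs =
    a0 e * ((kappa - 1) * L%:R + (apx_ratio - kappa) * o%:R)
    + a1 e * slack1 L%:R o%:R + a2 e * slack2 L%:R o%:R.
  by rewrite /rhs /slack1 /slack2 /qlatency /kappa /apx_ratio; field.
by rewrite !addr_ge0 ?mulr_ge0 ?slack1_nat ?slack2_nat.
Qed.

End QuadraticLatency.

Definition load {n : nat} {E : finType} (F : 'I_n -> {set E}) (e : E) : nat :=
  \sum_i (e \in F i : nat).

Definition load_before {n : nat} {E : finType} (pos : {perm 'I_n})
    (S : 'I_n -> {set E}) (i : 'I_n) (e : E) : nat :=
  \sum_j ((pos j < pos i)%N && (e \in S j) : nat).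

Section Ranks.
Variables (n : nat) (E : finType) (pos : {perm 'I_n}) (S : 'I_n -> {set E}).

Lemma load_before_le i e : (load_before pos S i e <= load S e)%N.
Proof. by apply: leq_sum => j _; case: (_ < _)%N; case: (e \in S j). Qed.

Lemma load_before_lt_load i e : e \in S i -> (load_before pos S i e < load S e)%N.
Proof.
move=> hi; rewrite /load_before /load (bigD1 i) //= [X in (_ < X)%N](bigD1 i) //=.
rewrite ltnn hi add0n add1n ltnS; apply: leq_sum => j _.
by case: (_ < _)%N; case: (e \in S j).
Qed.

Lemma load_before_strict i j e :
  (pos i < pos j)%N -> e \in S i -> (load_before pos S i e < load_before pos S j e)%N.
Proof.
move=> hij hi; rewrite /load_before (bigD1 i) //= [X in (_ < X)%N](bigD1 i) //=.
rewrite ltnn hij hi add0n add1n ltnS; apply: leq_sum => k _.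
case: (ltnP (pos k) (pos i)) => hk /=; first by rewrite (ltn_trans hk hij).
by case: (_ < _)%N.
Qed.

(* The users of e see pairwise distinct numbers of earlier users, all below
   load S e; hence these numbers are exactly 0, ..., load S e - 1. *)
Lemma sum_over_ranks (R : nmodType) e (g : nat -> R) :
  \sum_(i | e \in S i) g (load_before pos S i e) = \sum_(k < load S e) g k.
Proof.
set T := [seq i <- index_enum 'I_n | e \in S i].
rewrite -big_filter -/T -(big_map (load_before pos S ^~ e) xpredT g).
rewrite -(big_mkord xpredT g) /index_iota subn0; apply: perm_big.
have rank_inj : {in T &, injective (load_before pos S ^~ e)}.
  move=> i j; rewrite !mem_filter /= => /andP[hi _] /andP[hj _] hA.
  case: (ltngtP (pos i) (pos j)) => h.
  - by move: (load_before_strict h hi); rewrite hA ltnn.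
  - by move: (load_before_strict h hj); rewrite hA ltnn.
  - exact/(@perm_inj _ pos)/val_inj.
have ranks_uniq : uniq [seq load_before pos S i e | i <- T].
  by rewrite (map_inj_in_uniq rank_inj) filter_uniq // index_enum_uniq.
have ranks_sub : {subset [seq load_before pos S i e | i <- T] <= iota 0 (load S e)}.
  move=> k /mapP[i]; rewrite mem_filter /= => /andP[hi _] ->.
  by rewrite mem_iota add0n load_before_lt_load.
have ranks_size : (size (iota 0 (load S e)) <= size [seq load_before pos S i e | i <- T])%N.
  rewrite size_iota size_map size_filter /load -sum1_count.
  rewrite [X in (_ <= X)%N]big_mkcond /=.
  by apply: leq_sum => i _; case: (e \in S i).
have [_ eq_size] := uniq_min_size ranks_uniq ranks_sub ranks_size.
by apply: uniq_perm => //; exact: iota_uniq.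
Qed.

End Ranks.

Section Unweighted.
Variables (R : realFieldType) (n : nat) (E : finType) (w : 'I_n -> R).
Hypothesis unit_weights : forall i, w i = 1.

Lemma congestion_count (P : pprofile n E) e :
  congestion w P e = (\sum_j ((if P j is Some s then e \in s else false) : nat))%:R.
Proof.
rewrite /congestion big_mkcond natr_sum; apply: eq_bigr => j _.
by case: (P j) => //= s; case: (e \in s); rewrite ?unit_weights.
Qed.

Lemma congestion_on_arrival (pos : {perm 'I_n}) (S : 'I_n -> {set E}) i s e :
  congestion w (extend (before pos S i) i s) e = ((e \in s) + load_before pos S i e)%:R.
Proof.
rewrite congestion_count; congr (_%:R); rewrite /extend /before /load_before.
rewrite (bigD1 i) //= eqxx [in RHS](bigD1 i) //= ltnn; congr (_ + _).
by apply: eq_bigr => j hj; rewrite (negbTE hj); case: ifP.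
Qed.

Lemma sum_users (F : 'I_n -> {set E}) e (x : R) :
  \sum_(i | e \in F i) x = (load F e)%:R * x.
Proof.
rewrite big_mkcond /load natr_sum mulr_suml; apply: eq_bigr => i _.
by case: (e \in F i); rewrite ?mul1r ?mul0r.
Qed.

Lemma SUM_by_resource ell (F : 'I_n -> {set E}) :
  SUM w ell F = \sum_e (load F e)%:R * ell e (load F e)%:R.
Proof.
rewrite /SUM (eq_bigr (fun i => \sum_(e in F i) ell e (load F e)%:R)); last first.
  move=> i _; apply: eq_bigr => e _; rewrite congestion_count.
  by congr (ell e _%:R); apply: eq_bigr.
by rewrite (exchange_big_dep xpredT) //=; apply: eq_bigr => e _; rewrite sum_users.
Qed.

Section OneRoundWalk.
Variables (ell : E -> R -> R) (Sigma : 'I_n -> {set {set E}}).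
Hypothesis ell_mono : forall e (x y : R), 0 <= x -> x <= y -> ell e x <= ell e y.
Variables (pos : {perm 'I_n}) (S Sopt : 'I_n -> {set E}).
Hypothesis S_outcome : one_round_outcome w ell Sigma pos S.
Hypothesis Sopt_feasible : feasible Sigma Sopt.

Lemma arrival_cost_le i :
  \sum_(e in S i) ell e (load_before pos S i e).+1%:R <=
  \sum_(e in Sopt i) ell e ((load S e)%:R + 1).
Proof.
have [_ best] := S_outcome i.
have := best (Sopt i) (Sopt_feasible i); rewrite /pcost /extend eqxx.
have arrival_cost (s : {set E}) : \sum_(e in s) ell e (congestion w (extend (before pos S i) i s) e)
                    = \sum_(e in s) ell e (load_before pos S i e).+1%:R.
  by apply: eq_bigr => e he; rewrite congestion_on_arrival he.
rewrite !arrival_cost => /le_trans; apply; apply: ler_sum => e _.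
apply: ell_mono; first exact: ler0n.
by rewrite -natr1 lerD2r ler_nat load_before_le.
Qed.

Lemma potential_le_deviation :
  \sum_e \sum_(k < load S e) ell e k.+1%:R <=
  \sum_e (load Sopt e)%:R * ell e ((load S e)%:R + 1).
Proof.
have potential : \sum_e \sum_(k < load S e) ell e k.+1%:R
               = \sum_i \sum_(e in S i) ell e (load_before pos S i e).+1%:R.
  rewrite (exchange_big_dep xpredT) //=; apply: eq_bigr => e _.
  by rewrite (sum_over_ranks pos S e (fun k => ell e k.+1%:R)).
have deviation : \sum_e (load Sopt e)%:R * ell e ((load S e)%:R + 1)
               = \sum_i \sum_(e in Sopt i) ell e ((load S e)%:R + 1).
  by rewrite (exchange_big_dep xpredT) //=; apply: eq_bigr => e _; rewrite sum_users.
by rewrite potential deviation; apply: ler_sum => i _; exact: arrival_cost_le.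
Qed.

End OneRoundWalk.

End Unweighted.

Theorem mainTheorem11 (R : realFieldType) (n : nat) (E : finType)
    (w : 'I_n -> R) (Sigma : 'I_n -> {set {set E}}) (a0 a1 a2 : E -> R) :
  (forall i, w i = 1) ->
  (forall i, Sigma i != set0) ->
  (forall e, 0 <= a0 e /\ 0 <= a1 e /\ 0 <= a2 e) ->
  forall (pos : {perm 'I_n}) (S Sopt : 'I_n -> {set E}),
    one_round_outcome w (qlatency a0 a1 a2) Sigma pos S ->
    is_optimum w (qlatency a0 a1 a2) Sigma Sopt ->
    SUM w (qlatency a0 a1 a2) S <= (375888%:R / 10000%:R) * SUM w (qlatency a0 a1 a2) Sopt.
Proof.
move=> unit_w _ a_ge0 pos S Sopt S_outcome [Sopt_feasible _].
have -> : (375888%:R / 10000%:R : R) = apx_ratio by rewrite /apx_ratio; field.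
have Phi_le_Dev := potential_le_deviation unit_w (qlatency_mono a_ge0)
                     S_outcome Sopt_feasible.
rewrite !(SUM_by_resource unit_w).
apply: le_trans (ler_sum _ (fun e _ =>
  resource_smoothness a_ge0 e (load S e) (load Sopt e))) _.
rewrite big_split /= -!mulr_sumr sumrB gerDl.
apply: mulr_ge0_le0; first by rewrite /kappa; lra.
by rewrite subr_le0; exact: Phi_le_Dev.
Qed.
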